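(* Let $n\ge 2$, let $a_1,\dots,a_n$ be positive integers, let $b\ge 0$ be an integer, and let $M$ be the least common multiple of $a_1,\dots,a_n$ (more generally, $M$ may be taken to be any positive common multiple of $a_1,\dots,a_n$). Put $d_i=M/a_i$ for $i=1,\dots,n$, and $$f(t_1,\dots,t_n)=\frac{1}{M}\Bigl(b-\sum_{i=1}^n a_it_i\Bigr).$$ Let $P(b)$ be the number of $n$-tuples $(x_1,\dots,x_n)$ of non-negative integers with $\sum_{i=1}^n a_ix_i=b$. Then $$P(b)=\sum_{t_1=0}^{d_1-1}\sum_{t_2=0}^{d_2-1}\cdots\sum_{t_n=0}^{d_n-1} C\bigl(f(t_1,\dots,t_n)+1;\,n-1\bigr).$$
   Context: For a real number $k$ and a non-negative integer $l$, define $C(k;l)=\frac{1}{l!}\,k(k+1)\cdots(k+l-1)$ if $k$ is a positive integer (natural number), and $C(k;l)=0$ otherwise (in particular $C(k;l)=0$ whenever $k$ is not an integer or $k\le 0$). *)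

From HB Require Import structures.
From mathcomp Require Import all_boot all_order all_algebra.
Set Implicit Arguments. Unset Strict Implicit. Unset Printing Implicit Defensive.
Import Order.TTheory GRing.Theory Num.Theory.
Local Open Scope ring_scope.

Definition Cfun (k : rat) (l : nat) : rat :=
  if (k \is a Num.nat) && (0 < k)
  then (\prod_(i < l) (k + i%:R)) / (l`!)%:R
  else 0.

(* P(b): number of n-tuples (x_1..x_n) of nonnegative integers with
   sum a_i x_i = b.  Since every a_i >= 1, each x_i <= b, so the tuples
   range over {ffun 'I_n -> 'I_b.+1} without loss. *)
Definition Pcount (n : nat) (a : 'I_n -> nat) (b : nat) : nat :=
  #|[set x : {ffun 'I_n -> 'I_b.+1} | (\sum_(i < n) a i * x i)%N == b]|.

Definition ffun_val (n : nat) (a : 'I_n -> nat) (b M : nat) (t : 'I_n -> nat) : rat :=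
  (b%:R - \sum_(i < n) (a i)%:R * (t i)%:R) / M%:R.

From HB Require Import structures.
From mathcomp Require Import all_boot all_order all_algebra zify.
Import Order.TTheory GRing.Theory Num.Theory.
Local Open Scope ring_scope.

(* Split the solutions x of [sum a_i x_i = b] according to the residues
   t_i = x_i mod d_i.  Writing x_i = t_i + d_i q_i gives
   [sum a_i x_i = sum a_i t_i + M sum q_i], so the class of t is empty unless
   f(t) is a natural number k, and then it is in bijection with the weak
   compositions of k into n parts, of which there are C(k+1; n-1). *)

Lemma card_weak_compositions n k : (0 < n)%N ->
  #|[set s : {ffun 'I_n -> 'I_k.+1} | (\sum_i s i == k)%N]| = 'C(n.-1 + k, n.-1).
Proof.
case: n => [//|m] _ /=; rewrite -card_ord_partitions.
pose g (t : m.+1.-tuple 'I_k.+1) := [ffun i => tnth t i].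
have g_inj : injective g.
  by move=> t t' /ffunP gtt'; apply: eq_from_tnth => i; have := gtt' i; rewrite !ffunE.
rewrite -(card_imset _ g_inj); apply: eq_card => s; rewrite inE.
apply/idP/imsetP => [sum_s | [t + ->]].
  exists [tuple s i | i < m.+1]; last by apply/ffunP => i; rewrite ffunE tnth_mktuple.
  by rewrite inE big_tuple; under eq_bigr do rewrite tnth_mktuple.
by rewrite inE big_tuple; under eq_bigr do rewrite ffunE.
Qed.

Lemma bin_fact_rising k l : ('C(k + l, l) * l`! = \prod_(i < l) (k.+1 + i))%N.
Proof.
rewrite bin_ffact; elim: l => [|l IHl]; first by rewrite big_ord0.
by rewrite big_ord_recr /= -IHl addnS ffactSS mulnC; congr (_ * _)%N; lia.
Qed.

Lemma Cfun_natS (k l : nat) : Cfun (k%:R + 1) l = 'C(k + l, l)%:R.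
Proof.
rewrite /Cfun natr1 natr_nat ltr0Sn /=.
have -> : \prod_(i < l) (k.+1%:R + i%:R) = (\prod_(i < l) (k.+1 + i))%N%:R :> rat.
  by rewrite natr_prod; apply: eq_bigr => i _; rewrite natrD.
by rewrite -bin_fact_rising natrM mulfK // pnatr_eq0 -lt0n fact_gt0.
Qed.

Lemma Cfun_eq0 (q : rat) l : q \isn't a Num.nat -> Cfun (q + 1) l = 0.
Proof.
move=> q_nat; rewrite /Cfun; case: ifP => // /andP[/natrP[k q1k]].
rewrite q1k ltr0n => k_gt0.
have qk : q = k.-1%:R by rewrite -(addrK 1 q) q1k -subn1 natrB.
by rewrite qk natr_nat in q_nat.
Qed.

Section ResidueClasses.

Local Set Implicit Arguments.
Local Open Scope nat_scope.

Variables (n : nat) (a : 'I_n -> nat) (M b : nat).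
Hypothesis a_gt0 : forall i, 0 < a i.
Hypothesis M_gt0 : 0 < M.
Hypothesis a_dvd_M : forall i, a i %| M.

Local Notation d i := (M %/ a i).

Lemma d_gt0 i : 0 < d i.
Proof. by rewrite divn_gt0 // dvdn_leq. Qed.

Lemma mul_a_d i : a i * d i = M.
Proof. by rewrite mulnC divnK. Qed.

Lemma weighted_sum_divn_modn (x : 'I_n -> nat) :
  \sum_i a i * x i = \sum_i a i * (x i %% d i) + M * \sum_i x i %/ d i.
Proof.
rewrite big_distrr -big_split; apply: eq_bigr => i _ /=.
by rewrite {1}(divn_eq (x i) (d i)) mulnDr addnC mulnCA mul_a_d [_ * M]mulnC.
Qed.

Definition residue_class (t : 'I_n -> nat) :=
  [set x : {ffun 'I_n -> 'I_b.+1} |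
    (\sum_i a i * x i == b) && [forall i, x i %% d i == t i]].

Lemma Pcount_residue_classes :
  Pcount a b =
    \sum_(t : {ffun 'I_n -> 'I_M} | [forall i, t i < d i])
      #|residue_class (fun i => t i)|.
Proof.
have mod_lt_M i y : y %% d i < M.
  exact: leq_trans (ltn_pmod _ (d_gt0 i)) (leq_div _ _).
pose residues (x : {ffun 'I_n -> 'I_b.+1}) : {ffun 'I_n -> 'I_M} :=
  [ffun i => Ordinal (mod_lt_M i (x i))].
rewrite /Pcount -sum1dep_card (partition_big residues
  (fun t : {ffun 'I_n -> 'I_M} => [forall i, t i < d i])); last first.
  by move=> x _; apply/forallP => i; rewrite ffunE /= ltn_pmod ?d_gt0.
apply: eq_bigr => t _; rewrite sum1dep_card; apply: eq_card => x.
rewrite !inE; congr (_ && _); apply/eqP/forallP => [<- i | x_t].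
  by rewrite ffunE.
by apply/ffunP => i; apply: val_inj; rewrite ffunE /=; apply/eqP.
Qed.

Section FixedResidues.

Variable t : 'I_n -> nat.
Hypothesis t_lt_d : forall i, t i < d i.

Local Notation S := (\sum_i a i * t i).

Lemma weighted_sum_residue_class (x : 'I_n -> nat) :
  (forall i, x i %% d i = t i) ->
  \sum_i a i * x i = S + M * \sum_i x i %/ d i.
Proof.
by move=> x_t; rewrite weighted_sum_divn_modn; under eq_bigr do rewrite x_t.
Qed.

Lemma residue_class_sum x :
  x \in residue_class t -> b = S + M * \sum_i x i %/ d i.
Proof.
rewrite inE => /andP[/eqP sum_x /forallP x_t].
by rewrite -[in LHS]sum_x; apply: weighted_sum_residue_class => i; apply/eqP.
Qed.

Definition lift_residues m (q : {ffun 'I_n -> 'I_m}) (i : 'I_n) := t i + d i * q i.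

Lemma lift_residues_mod m (q : {ffun 'I_n -> 'I_m}) i :
  lift_residues q i %% d i = t i.
Proof. by rewrite /lift_residues addnC mulnC modnMDl modn_small. Qed.

Lemma lift_residues_div m (q : {ffun 'I_n -> 'I_m}) i :
  lift_residues q i %/ d i = q i.
Proof.
by rewrite /lift_residues addnC mulnC divnMDl ?d_gt0 // divn_small ?addn0.
Qed.

Lemma card_residue_class k : b = S + M * k ->
  #|residue_class t| = #|[set q : {ffun 'I_n -> 'I_k.+1} | \sum_i q i == k]|.
Proof.
move=> b_Sk; set Q := [set q | _].
have sum_lift q : q \in Q -> \sum_i a i * lift_residues q i = b.
  rewrite inE => /eqP sum_q.
  rewrite weighted_sum_residue_class ?b_Sk; last exact: lift_residues_mod.
  by under [X in M * X]eq_bigr do rewrite lift_residues_div; rewrite sum_q.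
have lift_le_b q i : q \in Q -> lift_residues q i <= b.
  move=> /sum_lift <-; apply: leq_trans (leq_pmull _ (a_gt0 i)) _.
  by rewrite (bigD1 i) //= leq_addr.
pose g (q : {ffun 'I_n -> 'I_k.+1}) : {ffun 'I_n -> 'I_b.+1} :=
  [ffun i => inord (lift_residues q i)].
have gE q i : q \in Q -> g q i = lift_residues q i :> nat.
  by move=> Qq; rewrite ffunE inordK // ltnS lift_le_b.
rewrite -(card_in_imset (f := g)); last first.
  move=> q q' Qq Qq' /ffunP gqq'; apply/ffunP => i; apply: val_inj.
  by rewrite /= -(lift_residues_div q) -(lift_residues_div q') -!gE // gqq'.
apply: eq_card => x; apply/idP/imsetP => [x_t | [q Qq ->]]; last first.
  rewrite inE; apply/andP; split.
    by under eq_bigr do rewrite gE //; rewrite sum_lift.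
  by apply/forallP => i; rewrite gE // lift_residues_mod.
have sum_quot : \sum_i x i %/ d i = k.
  apply/eqP; rewrite -(eqn_pmul2l M_gt0) -(eqn_add2l S).
  by rewrite -residue_class_sum // -b_Sk.
have quot_le i : x i %/ d i <= k by rewrite -sum_quot (bigD1 i) //= leq_addr.
pose q : {ffun 'I_n -> 'I_k.+1} := [ffun i => inord (x i %/ d i)].
have qE i : q i = x i %/ d i :> nat by rewrite ffunE inordK ?ltnS.
have Qq : q \in Q by rewrite inE; under eq_bigr do rewrite qE; rewrite sum_quot.
exists q => //; apply/ffunP => i; apply: val_inj.
rewrite /= gE // /lift_residues qE.
move: x_t; rewrite inE => /andP[_ /forallP/(_ i)/eqP <-].
by rewrite addnC mulnC -divn_eq.
Qed.

Lemma ffun_val_natE k : (ffun_val a b M t == k%:R)%R = (b == S + M * k).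
Proof.
have M_neq0 : (M%:R != 0 :> rat)%R by rewrite pnatr_eq0 -lt0n.
rewrite /ffun_val -(inj_eq (mulIf M_neq0)) divfK // subr_eq -(eqr_nat rat).
rewrite natrD natrM natr_sum addrC mulrC.
by under [in RHS]eq_bigr do rewrite natrM.
Qed.

Lemma card_residue_classE : 0 < n ->
  (#|residue_class t|%:R = Cfun (ffun_val a b M t + 1) n.-1)%R.
Proof.
move=> n_gt0.
have [/natrP[k fk] | f_nat] := boolP (ffun_val a b M t \is a Num.nat).
  have b_Sk : b = S + M * k by apply/eqP; rewrite -ffun_val_natE fk.
  by rewrite fk Cfun_natS (card_residue_class _ b_Sk) card_weak_compositions // addnC.
rewrite Cfun_eq0 //; apply/eqP; rewrite pnatr_eq0 cards_eq0; apply/eqP/setP => x.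
rewrite in_set0; apply/negbTE/negP => /residue_class_sum b_S.
move: f_nat; have /eqP -> : (ffun_val a b M t == (\sum_i x i %/ d i)%:R)%R.
  by rewrite ffun_val_natE -b_S.
by rewrite natr_nat.
Qed.

End FixedResidues.

End ResidueClasses.

Theorem mainTheorem1 (n : nat) (a : 'I_n -> nat) (b M : nat) :
  (2 <= n)%N ->
  (forall i, 0 < a i)%N ->
  (0 < M)%N ->
  (forall i, a i %| M)%N ->
  (Pcount a b)%:R =
    \sum_(t : {ffun 'I_n -> 'I_M} | [forall i, (t i < M %/ a i)%N])
      Cfun (ffun_val a b M (fun i => nat_of_ord (t i)) + 1) n.-1.
Proof.
move=> n_ge2 a_gt0 M_gt0 a_dvd_M.
rewrite (Pcount_residue_classes a M b) // natr_sum.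
apply: eq_bigr => t /forallP t_lt_d.
by rewrite card_residue_classE // ltnW.
Qed.
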